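(* Let $a<b$ and let $X$ be a random variable taking values in $[a,b]$, with probability density function $f:[a,b]\rightarrow[0,1]$ and cumulative distribution function $F(x)=\Pr(X\le x)=\int_a^x f(t)\,dt$. Assume that $F$ is twice continuously differentiable in $(a,b)$ (so $F'=f$) with $f'\in L^2[a,b]$. Then for all $x\in[a,\frac{a+b}{2}]$, \[ \left|\frac{1}{2}[F(x)+F(a+b-x)]-\frac{b-E(X)}{b-a}\right|\leq \frac{(b-a)^{1/2}}{\pi}\left[\frac{(b-a)^2}{48}+\left(x-\frac{3a+b}{4}\right)^2\right]^{1/2}\|f'\|_2, \] where $E(X)$ is the expectation of $X$.
   Context: $\|g\|_2=\left(\int_a^b g(t)^2\,dt\right)^{1/2}$. *)

From HB Require Import structures.
From mathcomp Require Import all_boot all_order all_algebra.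
From mathcomp Require Import all_classical all_reals all_analysis.
Set Implicit Arguments. Unset Strict Implicit. Unset Printing Implicit Defensive.
Import Order.TTheory GRing.Theory Num.Theory.
Import numFieldNormedType.Exports.
Local Open Scope classical_set_scope.
Local Open Scope ring_scope.

Definition cdf_of {R : realType} (f : R -> R) (a x : R) : R :=
  \int[@lebesgue_measure R]_(t in `[a, x]) f t.

Definition mean_of {R : realType} (f : R -> R) (a b : R) : R :=
  \int[@lebesgue_measure R]_(t in `[a, b]) (t * f t).

Definition L2norm {R : realType} (g : R -> R) (a b : R) : R :=
  Num.sqrt (\int[@lebesgue_measure R]_(t in `[a, b]) (g t ^+ 2)).

From HB Require Import structures.
From mathcomp Require Import all_boot all_order all_algebra.
From mathcomp Require Import all_classical all_reals all_analysis.
From mathcomp Require Import measurable_realfun.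
From mathcomp Require Import ring lra zify.
Set Implicit Arguments.
Unset Strict Implicit.
Unset Printing Implicit Defensive.
Import Order.TTheory GRing.Theory Num.Theory.
Import numFieldNormedType.Exports.
Local Open Scope classical_set_scope.
Local Open Scope ring_scope.

(* Put y = a + b - x and m = (a + b) / 2, and let K be the Peano kernel equal
   to (t - a)^2/2 on [a, x], to (t - m)^2/2 + k on [x, y] and to (t - b)^2/2
   on [y, b], where k makes K continuous.  Since K' = t - c on each piece,
   integration by parts turns the integrals of (t - c) f(t) into integrals of
   f' K; the boundary terms telescope, and those at a and b vanish because f
   is bounded.  This gives
     (F(x) + F(y))/2 - (b - E X)/(b - a) = - (\int_a^b f' K) / (b - a).
   Cauchy-Schwarz bounds the integral by ||K||_2 ||f'||_2, an explicit
   computation gives 10 ||K||_2^2 <= (b - a)^3 ((b - a)^2/48 + (x - (3a+b)/4)^2),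
   and pi^2 <= 10 concludes. *)

Section pi_bound.
Variable R : realType.

Lemma cos_79_50_lt0 : cos (79 / 50) < 0 :> R.
Proof.
(* The series of cos (79/50) is alternating with decreasing terms from the
   fifth one on, so cos (79/50) lies below its (negative) fifth partial sum. *)
set c : R := 79 / 50.
rewrite -(opprK (cos _)) oppr_lt0; have /cvgN h := @cvg_cos_coeff' R c.
rewrite -(cvg_lim (@Rhausdorff R) h).
apply: (@lt_trans _ _ (\sum_(0 <= i < 5) - cos_coeff' c i)).
  do 5 rewrite big_nat_recl//; rewrite big_nil addr0 /cos_coeff'.
  rewrite /c -!exprnP /= !factS fact0 !natrM.
  lra.
rewrite -seriesN lt_sum_lim_series //; first by move/cvgP in h; rewrite seriesN.
move=> d; rewrite /cos_coeff' -!exprnP.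
rewrite -[(-1) ^+ (5 + d.*2)%N]signr_odd -[(-1) ^+ (5 + d.*2.+1)%N]signr_odd.
rewrite !oddD odd_double /= negbK odd_double expr0 expr1 mulN1r mul1r mulNr opprK.
have -> : ((5 + d.*2.+1).*2)`! = ((5 + d.*2).*2).+2`!.
  by congr (_`!); rewrite doubleS addnS.
set m := (5 + d.*2).*2.
have -> : (m.+2)`! = (m.+2 * m.+1 * m`!)%N by rewrite factS factS mulnA.
rewrite natrM.
have m10 : (10 <= m)%N by rewrite /m -addnn; lia.
have -> : c ^+ m.+2 = c ^+ m * (c * c) by rewrite !exprS; ring.
have cm_gt0 : 0 < c ^+ m by rewrite exprn_gt0 // /c; lra.
have fact_gt0 : 0 < (m`!)%:R :> R by rewrite ltr0n fact_gt0.
have N_ge : 132 <= (m.+2 * m.+1)%:R :> R by rewrite ler_nat; nia.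
set p := c ^+ m; set k : R := (m`!)%:R; set N : R := (m.+2 * m.+1)%:R.
have -> : p * (c * c) / (N * k) = (p / k) * ((c * c) / N) by rewrite invfM; ring.
have ratio_lt1 : (c * c) / N < 1 by rewrite ltr_pdivrMr ?mul1r /c; lra.
rewrite -{1}[p / k]mulr1 -mulrBr mulr_gt0 ?divr_gt0 ?subr_gt0 //.
Qed.

Lemma pi_sqr_le10 : pi ^+ 2 <= 10 :> R.
Proof.
have pi_gt0 := pi_gt0 R.
have pihalf_lt : pi / 2 < 79 / 50 :> R.
  rewrite ltNge; apply/negP => le_pihalf.
  have := @cos_ge0_pihalf R (79 / 50); have := cos_79_50_lt0.
  rewrite le_pihalf andbT; lra.
nra.
Qed.

End pi_bound.

Section Rintegral_facts.
Variable R : realType.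
Notation mu := (@lebesgue_measure R).

Lemma Rintegral_itv_split (h : R -> R) (u v w : R) : u <= v -> v <= w ->
  mu.-integrable `[u, w] (EFin \o h) ->
  \int[mu]_(t in `[u, w]) h t = \int[mu]_(t in `[u, v]) h t + \int[mu]_(t in `[v, w]) h t.
Proof.
move=> uv vw hi.
have := @Rintegral_itvB R h (BLeft u) (BRight w) v hi.
rewrite !bnd_simp => /(_ uv vw).
rewrite Rintegral_itv_obnd_cbnd; last first.
  by apply: integrableS hi => //; apply: subset_itvr; rewrite bnd_simp.
by move=> <-; ring.
Qed.

Lemma integrable_continuousMl (g h : R -> R) (u v : R) : continuous h ->
  mu.-integrable `[u, v] (EFin \o g) ->
  mu.-integrable `[u, v] (EFin \o (fun t => h t * g t)).
Proof.
move=> ch gi.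
have -> : EFin \o (fun t => h t * g t) = ((EFin \o h) \* (EFin \o g))%E.
  by apply/funext => t /=.
apply: integrableMr => //.
  by apply: subspace_continuous_measurable_fun => //; exact: continuous_subspaceT.
have ctsf : {within `[u, v], continuous h} by apply: continuous_subspaceT.
have /compact_bounded[M [_ mrt]] := continuous_compact ctsf (@segment_compact _ u v).
by exists M; split; rewrite ?num_real // => ? ? ? ?; exact: mrt.
Qed.

Lemma normrM_le_amgm (l x y : R) : 0 < l -> `|x * y| <= (l * y ^+ 2 + x ^+ 2 / l) / 2.
Proof.
move=> l_gt0.
rewrite -(real_normK (num_real x)) -(real_normK (num_real y)) normrM -subr_ge0.
have -> : (l * `|y| ^+ 2 + `|x| ^+ 2 / l) / 2 - `|x| * `|y|
    = (l * `|y| - `|x|) ^+ 2 * (l^-1 / 2).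
  by field; rewrite gt_eqF.
by rewrite mulr_ge0 ?sqr_ge0 // divr_ge0 // ltW // invr_gt0.
Qed.

Lemma normrM_le_sqrD (x y : R) : `|x * y| <= x ^+ 2 + y ^+ 2.
Proof.
have := sqr_ge0 (`|x| - `|y|).
rewrite -(real_normK (num_real x)) -(real_normK (num_real y)) normrM.
by have := normr_ge0 x; have := normr_ge0 y; nra.
Qed.

Lemma Rintegral_mul_le_amgm (g h : R -> R) (u v l : R) : 0 < l ->
  mu.-integrable `[u, v] (EFin \o (fun t => g t * h t)) ->
  mu.-integrable `[u, v] (EFin \o (fun t => g t ^+ 2)) ->
  mu.-integrable `[u, v] (EFin \o (fun t => h t ^+ 2)) ->
  `|\int[mu]_(t in `[u, v]) (g t * h t)| <=
  (l * \int[mu]_(t in `[u, v]) (h t ^+ 2) + \int[mu]_(t in `[u, v]) (g t ^+ 2) / l) / 2.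
Proof.
move=> l_gt0 igh ig2 ih2.
have ilh2 := integrable_continuousMl (@cst_continuous _ R l) ih2.
have ilg2 := integrable_continuousMl (@cst_continuous _ R l^-1) ig2.
have isum : mu.-integrable `[u, v] (EFin \o (fun t => l * h t ^+ 2 + l^-1 * g t ^+ 2)).
  have -> : EFin \o (fun t => l * h t ^+ 2 + l^-1 * g t ^+ 2) =
     ((EFin \o (fun t => (l * h t ^+ 2)%R)) \+ (EFin \o (fun t => (l^-1 * g t ^+ 2)%R)))%E.
    by apply/funext => t.
  exact: integrableD.
apply: le_trans (le_normr_Rintegral _ igh) _ => //.
apply: (@le_trans _ _ (\int[mu]_(t in `[u, v]) (2^-1 * (l * h t ^+ 2 + l^-1 * g t ^+ 2)))).
  apply: le_Rintegral => //; first exact: integrable_norm.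
    exact: integrable_continuousMl (@cst_continuous _ R 2^-1) isum.
  move=> t _; rewrite [2^-1 * _]mulrC [l^-1 * _]mulrC.
  exact: normrM_le_amgm.
rewrite RintegralZl // (RintegralD _ ilh2 ilg2) // !RintegralZl //.
by rewrite mulrC [_ / l]mulrC.
Qed.

Lemma le_sqrt_mul_of_amgm (z N C : R) : 0 <= N -> 0 <= C ->
  (forall l, 0 < l -> z <= (l * N + C / l) / 2) -> z <= Num.sqrt N * Num.sqrt C.
Proof.
move=> N_ge0 C_ge0 amgm.
have [N_gt0|] := boolP (0 < N); have [C_gt0|] := boolP (0 < C).
- have sN : 0 < Num.sqrt N by rewrite sqrtr_gt0.
  have sC : 0 < Num.sqrt C by rewrite sqrtr_gt0.
  apply: le_trans (amgm _ (divr_gt0 sC sN)) _; rewrite le_eqVlt; apply/orP; left.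
  move: sN sC (sqr_sqrtr N_ge0) (sqr_sqrtr C_ge0).
  set sN := Num.sqrt N; set sC := Num.sqrt C => sN_gt0 sC_gt0 <- <-.
  by apply/eqP; field; rewrite !gt_eqF.
- rewrite -leNgt => C_le0; have C0 : C = 0 by apply/eqP; rewrite eq_le C_le0.
  rewrite C0 in amgm *.
  rewrite sqrtr0 mulr0 leNgt; apply/negP => z_gt0.
  have := amgm (z / (N + 1)) (divr_gt0 z_gt0 (ltr_pwDr ltr01 N_ge0)).
  rewrite mul0r addr0 => h.
  have : z / (N + 1) * N < z by rewrite mulrAC ltr_pdivrMr; nra.
  lra.
- rewrite -leNgt => N_le0; have N0 : N = 0 by apply/eqP; rewrite eq_le N_le0.
  rewrite N0 in amgm *.
  rewrite sqrtr0 mul0r leNgt; apply/negP => z_gt0.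
  have := amgm ((C + 1) / z) (divr_gt0 (ltr_pwDr ltr01 C_ge0) z_gt0).
  rewrite mulr0 add0r => h.
  have : C / ((C + 1) / z) < 2 * z.
    by rewrite invfM invrK mulrA mulrAC ltr_pdivrMr; nra.
  lra.
- rewrite -!leNgt => C_le0 N_le0.
  have C0 : C = 0 by apply/eqP; rewrite eq_le C_le0.
  have N0 : N = 0 by apply/eqP; rewrite eq_le N_le0.
  rewrite C0 N0 in amgm *.
  rewrite sqrtr0 mulr0 leNgt; apply/negP => z_gt0.
  have := amgm 1 ltr01; rewrite mul1r mul0r add0r; lra.
Qed.

Lemma cvg_boundedM0 {T : Type} (F : set_system T) {FF : Filter F}
    (g h : T -> R) (M : R) :
  (\forall t \near F, `|g t| <= M) -> h @ F --> 0 -> (fun t => g t * h t) @ F --> 0.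
Proof.
move=> gM h0; apply/cvgrPdist_le => e e_gt0.
have eM_gt0 : 0 < e / (`|M| + 1) by rewrite divr_gt0 // ltr_pwDr.
move/cvgrPdist_le : h0 => /(_ _ eM_gt0); apply: filterS2 gM => t gtM.
rewrite !sub0r !normrN normrM => htM.
apply: le_trans (ler_pM (normr_ge0 _) (normr_ge0 _) gtM htM) _.
rewrite mulrCA ger_pMr // ler_pdivrMr ?mul1r; last by rewrite ltr_pwDr.
by rewrite (le_trans (ler_norm M)) // lerDl.
Qed.

End Rintegral_facts.

Section parabola.
Variable R : realType.
Notation mu := (@lebesgue_measure R).

Definition parabola (c k t : R) : R := (t - c) ^+ 2 / 2 + k.

Lemma derivable_parabola (c k t : R) :
  derivable (parabola c k) t 1 /\ derive1 (parabola c k) t = t - c.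
Proof.
have [d1 d2] : is_derive t 1 (parabola c k) (t - c).
  by apply: is_derive_eq; rewrite /GRing.scale /=; field.
by split => //; rewrite derive1E.
Qed.

Lemma continuous_parabola (c k : R) : continuous (parabola c k).
Proof.
move=> t; apply: differentiable_continuous; rewrite -derivable1_diffP.
exact: (derivable_parabola c k t).1.
Qed.

Lemma derivable_oo_LRcontinuous_parabola (c k u v : R) :
  derivable_oo_LRcontinuous (parabola c k) u v.
Proof.
split; first by move=> t _; exact: (derivable_parabola c k t).1.
- exact/cvg_at_right_filter/continuous_parabola.
- exact/cvg_at_left_filter/continuous_parabola.
Qed.

Lemma continuous_parabola_sqr (c k : R) : continuous (fun t => parabola c k t ^+ 2).
Proof.
have -> : (fun t => parabola c k t ^+ 2) = (fun x => x ^+ 2) \o parabola c k by [].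
move=> t; apply: continuous_comp; [exact: continuous_parabola | exact: exprn_continuous].
Qed.

Lemma integrable_parabola_sqr (c k u v : R) :
  mu.-integrable `[u, v] (EFin \o (fun t => parabola c k t ^+ 2)).
Proof.
apply: continuous_compact_integrable; first exact: segment_compact.
exact/continuous_subspaceT/continuous_parabola_sqr.
Qed.

Definition parabola_sqr_primitive (c k t : R) : R :=
  (t - c) ^+ 5 / 20 + k * (t - c) ^+ 3 / 3 + k ^+ 2 * t.

Lemma Rintegral_parabola_sqr (c k u v : R) : u <= v ->
  \int[mu]_(t in `[u, v]) (parabola c k t ^+ 2) =
  parabola_sqr_primitive c k v - parabola_sqr_primitive c k u.
Proof.
have prim_derive (t : R) : is_derive t 1 (parabola_sqr_primitive c k) (parabola c k t ^+ 2).
  by apply: is_derive_eq; rewrite /GRing.scale /parabola /=; field.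
have prim_cont (t : R) : {for t, continuous (parabola_sqr_primitive c k)}.
  by apply: differentiable_continuous; rewrite -derivable1_diffP; case: (prim_derive t).
rewrite le_eqVlt => /orP[/eqP <-|uv].
  by rewrite set_itv1 Rintegral_set1 subrr.
rewrite /Rintegral (@continuous_FTC2 R _ (parabola_sqr_primitive c k) u v uv) //.
- exact/continuous_subspaceT/continuous_parabola_sqr.
- split; first by move=> t _; case: (prim_derive t).
  + exact/cvg_at_right_filter/prim_cont.
  + exact/cvg_at_left_filter/prim_cont.
- by move=> t _; rewrite derive1E; case: (prim_derive t).
Qed.

Definition kernel_shift (a b x : R) : R :=
  (x - a) ^+ 2 / 2 - (x - (a + b) / 2) ^+ 2 / 2.

(* [peano_sum I a b x] adds [I u v P] over the three pieces [[u, v]] of the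
   Peano kernel, [P] being the parabola the kernel equals on that piece. *)
Definition peano_sum (I : R -> R -> (R -> R) -> R) (a b x : R) : R :=
  I a x (parabola a 0)
  + I x (a + b - x) (parabola ((a + b) / 2) (kernel_shift a b x))
  + I (a + b - x) b (parabola b 0).

Lemma peano_sum_sqr_le (a b x : R) : a <= x <= (a + b) / 2 ->
  10 * peano_sum (fun u v P => \int[mu]_(t in `[u, v]) (P t ^+ 2)) a b x
  <= (b - a) ^+ 3 * ((b - a) ^+ 2 / 48 + (x - (3 * a + b) / 4) ^+ 2).
Proof.
move=> /andP[ax xm].
(* With s = x - a and w = b - 2x + a, the right-hand side minus the left-hand
   side is s (2s + w) g with g = 5/6 s^3 - 1/3 s^2 w + 1/2 s w^2 + 1/3 w^3. *)
rewrite /peano_sum !Rintegral_parabola_sqr; try lra.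
set s := x - a; set w := b - a - 2 * s.
have s_ge0 : 0 <= s by rewrite /s; lra.
have w_ge0 : 0 <= w by rewrite /w /s; lra.
have -> : b = a + 2 * s + w by rewrite /w /s; ring.
have -> : x = a + s by rewrite /s; ring.
rewrite /kernel_shift /parabola_sqr_primitive -subr_ge0.
set g := 5/6 * s ^+ 3 - 1/3 * s ^+ 2 * w + 1/2 * s * w ^+ 2 + 1/3 * w ^+ 3.
have g_ge0 : 0 <= g.
  have q : 0 <= 5/6 * s ^+ 2 - 1/3 * s * w + 1/2 * w ^+ 2.
    by have := sqr_ge0 (s - w / 5); have := sqr_ge0 w; nra.
  have := mulr_ge0 s_ge0 q; have : 0 <= w ^+ 3 by rewrite exprn_ge0.
  rewrite /g; nra.
apply: (le_trans (mulr_ge0 (mulr_ge0 s_ge0 (_ : 0 <= 2 * s + w)) g_ge0)); first lra.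
by rewrite le_eqVlt; apply/orP; left; apply/eqP; rewrite /g; field.
Qed.

Lemma sqrt_peano_sum_sqr_le (a b x : R) : a < b -> a <= x <= (a + b) / 2 ->
  Num.sqrt (peano_sum (fun u v P => \int[mu]_(t in `[u, v]) (P t ^+ 2)) a b x)
  <= (b - a) * (Num.sqrt (b - a) / pi
                * Num.sqrt ((b - a) ^+ 2 / 48 + (x - (3 * a + b) / 4) ^+ 2)).
Proof.
move=> ab /peano_sum_sqr_le.
set N := peano_sum _ a b x; set h := (b - a) ^+ 2 / 48 + _ => N_le.
have pi_gt0 := pi_gt0 R; have L_gt0 : 0 < b - a by lra.
have h_ge0 : 0 <= h by rewrite addr_ge0 ?sqr_ge0 // divr_ge0 ?sqr_ge0.
have N_ge0 : 0 <= N.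
  by rewrite /N /peano_sum !addr_ge0 // Rintegral_ge0 // => t _; exact: sqr_ge0.
have -> : (b - a) * (Num.sqrt (b - a) / pi * Num.sqrt h)
    = Num.sqrt ((b - a) ^+ 2 * ((b - a) * h)) / pi.
  rewrite sqrtrM ?sqr_ge0 // sqrtr_sqr gtr0_norm // sqrtrM ?(ltW L_gt0) //.
  by ring.
rewrite ler_pdivlMr // -(gtr0_norm pi_gt0) -sqrtr_sqr mulrC -sqrtrM ?sqr_ge0 //.
rewrite ler_sqrt; last by rewrite !mulr_ge0 ?sqr_ge0 ?(ltW L_gt0).
by have := pi_sqr_le10 R; nra.
Qed.

End parabola.

Section density.
Variables (R : realType) (f : R -> R) (a b : R).
Notation mu := (@lebesgue_measure R).
Notation f' := (derive1 f).
Hypothesis hab : a < b.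
Hypothesis hf01 : forall t, a <= t <= b -> 0 <= f t <= 1.
Hypothesis hfint : mu.-integrable `[a, b] (fun t => (f t)%:E).
Hypothesis hf1 : \int[mu]_(t in `[a, b]) f t = 1.
Hypothesis hf2 : forall x, a < x < b -> derivable f x 1.
Hypothesis hf'c : {within `]a, b[, continuous f'}.
Hypothesis hf'L2 : mu.-integrable `[a, b] (fun t => (f' t ^+ 2)%:E).

Lemma density_continuous (t : R) : a < t < b -> {for t, continuous f}.
Proof.
by move=> /hf2 df; apply: differentiable_continuous; rewrite -derivable1_diffP.
Qed.

Lemma measurable_derive_density : measurable_fun `[a, b] f'.
Proof.
have ab_open := @interval_open R (BRight a) (BLeft b).
apply: (@measurable_fun_itv_cc R a b false true).
apply: open_continuous_measurable_fun => //.
by rewrite -continuous_open_subspace.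
Qed.

Lemma integrable_derive_parabola (u v c k : R) : a <= u -> v <= b ->
  mu.-integrable `[u, v] (EFin \o (fun t => f' t * parabola c k t)).
Proof.
move=> au vb.
have sub : `[u, v] `<=` `[a, b] by apply: subset_itv; rewrite bnd_simp.
apply: (@le_integrable _ _ _ mu _ _ _
  (EFin \o (fun t => parabola c k t ^+ 2 + f' t ^+ 2))) => //.
- apply/measurable_EFinP; apply: measurable_funM.
    exact: measurable_funS measurable_derive_density.
  apply: subspace_continuous_measurable_fun => //.
  exact/continuous_subspaceT/continuous_parabola.
- move=> t _ /=; rewrite lee_fin [`|_ + _|]ger0_norm ?addr_ge0 ?sqr_ge0 //.
  by rewrite addrC; exact: normrM_le_sqrD.
- have -> : EFin \o (fun t => parabola c k t ^+ 2 + f' t ^+ 2) =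
     ((EFin \o (fun t => (parabola c k t ^+ 2)%R)) \+ (fun t => (f' t ^+ 2)%:E))%E.
    by apply/funext => t.
  apply: integrableD => //; first exact: integrable_parabola_sqr.
  exact: integrableS hf'L2.
Qed.

Lemma integrable_density_moment (u v c : R) : a <= u -> v <= b ->
  mu.-integrable `[u, v] (EFin \o (fun t => (t - c) * f t)).
Proof.
move=> au vb; apply: integrable_continuousMl.
  by move=> t; apply: continuousB; [exact: cvg_id | exact: cvg_cst].
by apply: integrableS hfint => //; apply: subset_itv; rewrite bnd_simp.
Qed.

Lemma Rintegral_density_moment (u v c : R) : a <= u -> v <= b ->
  \int[mu]_(t in `[u, v]) ((t - c) * f t) =
  \int[mu]_(t in `[u, v]) (t * f t) - c * \int[mu]_(t in `[u, v]) f t.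
Proof.
move=> au vb.
have iF : mu.-integrable `[u, v] (EFin \o f).
  by apply: integrableS hfint => //; apply: subset_itv; rewrite bnd_simp.
have itf : mu.-integrable `[u, v] (EFin \o (fun t => t * f t)).
  by apply: integrable_continuousMl iF => t; exact: cvg_id.
have icf := integrable_continuousMl (@cst_continuous _ R c) iF.
under eq_Rintegral do rewrite mulrBl.
by rewrite RintegralB // RintegralZl.
Qed.

(* On a segment inside ]a, b[, f is C^1 and the library's integration by
   parts applies; the endpoints a and b are reached below by taking limits. *)
Lemma ibp_parabola_inner (u v c k : R) : a < u -> u < v -> v < b ->
  \int[mu]_(t in `[u, v]) ((t - c) * f t) =
  f v * parabola c k v - f u * parabola c k u
  - \int[mu]_(t in `[u, v]) (f' t * parabola c k t).
Proof.
move=> au uv vb.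
under eq_Rintegral do rewrite mulrC.
apply: Rintegration_by_parts => //.
- apply: continuous_subspaceW hf'c => t /=; rewrite !in_itv /= => /andP[? ?].
  by apply/andP; split; lra.
- split; first by move=> t; rewrite in_itv /= => /andP[? ?]; apply: hf2; lra.
  + by apply/cvg_at_right_filter/density_continuous; lra.
  + by apply/cvg_at_left_filter/density_continuous; lra.
- by apply: continuous_subspaceT => t; apply: continuousB; [exact: cvg_id | exact: cvg_cst].
- exact: derivable_oo_LRcontinuous_parabola.
- by move=> t _; rewrite (derivable_parabola c k t).2.
Qed.

Lemma density_norm_le1 (t : R) : a <= t <= b -> `|f t| <= 1.
Proof. by move=> /hf01 /andP[f_ge0 f_le1]; rewrite ger0_norm. Qed.

Lemma ibp_parabola_left (v c k : R) : a < v -> v < b -> parabola c k a = 0 ->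
  \int[mu]_(t in `[a, v]) ((t - c) * f t) =
  f v * parabola c k v - \int[mu]_(t in `[a, v]) (f' t * parabola c k t).
Proof.
move=> av vb P0.
have imom := integrable_density_moment c (lexx a) (ltW vb).
have iP := integrable_derive_parabola c k (lexx a) (ltW vb).
pose K u := \int[mu]_(t in `[a, u]) ((t - c) * f t) - f u * parabola c k u
            + \int[mu]_(t in `[a, u]) (f' t * parabola c k t).
have K_const u : a < u < v -> K u = K v.
  move=> /andP[au uv].
  rewrite /K (Rintegral_itv_split (ltW au) (ltW uv) imom).
  rewrite (Rintegral_itv_split (ltW au) (ltW uv) iP) (ibp_parabola_inner c k au uv vb); ring.
have K_cvgv : K u @[u --> a^'+] --> K v.
  apply: cvg_near_cst; near=> u; apply: K_const; apply/andP; split.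
    by near: u; exact: nbhs_right_gt.
  by near: u; exact: nbhs_right_lt.
have K_cvg0 : K u @[u --> a^'+] --> 0.
  rewrite -[0](addr0 0) -[X in X + _](subr0 0).
  apply: cvgD; first apply: cvgB.
  - exact: cvg_at_right_filter (parameterized_integral_cvg_left av imom).
  - apply: (cvg_boundedM0 (M := 1)); last first.
      by rewrite -P0; exact/cvg_at_right_filter/continuous_parabola.
    near=> u; apply: density_norm_le1.
    have au : a < u by near: u; exact: nbhs_right_gt.
    have ub : u < b by near: u; exact: nbhs_right_lt.
    by apply/andP; split; lra.
  - exact: cvg_at_right_filter (parameterized_integral_cvg_left av iP).
have : K v = 0 by apply: (cvg_unique _ K_cvgv K_cvg0); exact: Rhausdorff.
rewrite /K; lra.
Unshelve. all: by end_near.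
Qed.

Lemma ibp_parabola_right (u c k : R) : a < u -> u < b -> parabola c k b = 0 ->
  \int[mu]_(t in `[u, b]) ((t - c) * f t) =
  - (f u * parabola c k u) - \int[mu]_(t in `[u, b]) (f' t * parabola c k t).
Proof.
move=> au ub P0.
have imom := integrable_density_moment c (ltW au) (lexx b).
have iP := integrable_derive_parabola c k (ltW au) (lexx b).
pose K v := \int[mu]_(t in `[u, v]) ((t - c) * f t) - f v * parabola c k v
            + \int[mu]_(t in `[u, v]) (f' t * parabola c k t).
have K_cvgu : K v @[v --> b^'-] --> - (f u * parabola c k u).
  apply: cvg_near_cst; near=> v.
  have uv : u < v by near: v; exact: nbhs_left_gt.
  have vb : v < b by near: v; exact: nbhs_left_lt.
  by rewrite /K (ibp_parabola_inner c k au uv vb); ring.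
have K_cvg : K v @[v --> b^'-] --> \int[mu]_(t in `[u, b]) ((t - c) * f t) - 0
     + \int[mu]_(t in `[u, b]) (f' t * parabola c k t).
  apply: cvgD; first apply: cvgB.
  - exact: parameterized_integral_cvg_at_left ub imom.
  - apply: (cvg_boundedM0 (M := 1)); last first.
      by rewrite -P0; exact/cvg_at_left_filter/continuous_parabola.
    near=> v; apply: density_norm_le1.
    have av : a < v by near: v; exact: nbhs_left_gt.
    have vb : v < b by near: v; exact: nbhs_left_lt.
    by apply/andP; split; lra.
  - exact: parameterized_integral_cvg_at_left ub iP.
have : - (f u * parabola c k u) = \int[mu]_(t in `[u, b]) ((t - c) * f t) - 0
    + \int[mu]_(t in `[u, b]) (f' t * parabola c k t).
  by apply: (cvg_unique _ K_cvgu K_cvg); exact: Rhausdorff.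
lra.
Unshelve. all: by end_near.
Qed.

Lemma ibp_parabola (u v c k : R) : a <= u -> u <= v -> v <= b ->
  (u = a -> parabola c k u = 0) -> (v = b -> parabola c k v = 0) ->
  \int[mu]_(t in `[u, v]) ((t - c) * f t) =
  f v * parabola c k v - f u * parabola c k u
  - \int[mu]_(t in `[u, v]) (f' t * parabola c k t).
Proof.
move=> au uv vb Pu Pv.
have [<-|neq_uv] := eqVneq u v; first by rewrite set_itv1 !Rintegral_set1; ring.
have {neq_uv}uv : u < v by rewrite lt_neqAle neq_uv uv.
have [eua|nua] := eqVneq u a; have [evb|nvb] := eqVneq v b.
- have [am mb] := midf_lt hab.
  rewrite eua evb in Pu Pv *.
  rewrite (Rintegral_itv_split (ltW am) (ltW mb)); last first.
    exact: integrable_density_moment.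
  rewrite [X in _ = _ - X](Rintegral_itv_split (ltW am) (ltW mb)); last first.
    exact: integrable_derive_parabola.
  rewrite (ibp_parabola_left am mb (Pu erefl)).
  rewrite (ibp_parabola_right am mb (Pv erefl)) (Pu erefl) (Pv erefl); ring.
- have vb' : v < b by rewrite lt_neqAle nvb vb.
  rewrite eua in Pu uv *.
  by rewrite (ibp_parabola_left uv vb' (Pu erefl)) (Pu erefl); ring.
- have au' : a < u by rewrite lt_neqAle eq_sym nua au.
  rewrite evb in Pv uv *.
  by rewrite (ibp_parabola_right au' uv (Pv erefl)) (Pv erefl); ring.
- have vb' : v < b by rewrite lt_neqAle nvb vb.
  have au' : a < u by rewrite lt_neqAle eq_sym nua au.
  exact: ibp_parabola_inner.
Qed.

Lemma Rintegral_derive_parabola (u v c k : R) : a <= u -> u <= v -> v <= b ->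
  (u = a -> parabola c k u = 0) -> (v = b -> parabola c k v = 0) ->
  \int[mu]_(t in `[u, v]) (f' t * parabola c k t) =
  f v * parabola c k v - f u * parabola c k u
  - (\int[mu]_(t in `[u, v]) (t * f t) - c * \int[mu]_(t in `[u, v]) f t).
Proof.
move=> au uv vb Pu Pv.
by rewrite -Rintegral_density_moment // (ibp_parabola au uv vb Pu Pv); ring.
Qed.

Lemma deviation_peano_sum (x : R) : a <= x <= (a + b) / 2 ->
  (cdf_of f a x + cdf_of f a (a + b - x)) / 2 - (b - mean_of f a b) / (b - a)
  = - peano_sum (fun u v P => \int[mu]_(t in `[u, v]) (f' t * P t)) a b x / (b - a).
Proof.
move=> /andP[ax xm]; have [am mb] := midf_lt hab.
rewrite /peano_sum; set y := a + b - x; set k := kernel_shift a b x.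
have xy : x <= y by rewrite /y; lra.
have yb : y <= b by rewrite /y; lra.
have ay : a < y by rewrite /y; lra.
have xb : x < b by lra.
have split3 (h : R -> R) : mu.-integrable `[a, b] (EFin \o h) ->
    \int[mu]_(t in `[a, b]) h t = \int[mu]_(t in `[a, x]) h t
      + \int[mu]_(t in `[x, y]) h t + \int[mu]_(t in `[y, b]) h t.
  move=> ih; rewrite (Rintegral_itv_split ax (ltW xb) ih).
  rewrite (Rintegral_itv_split xy yb) ?addrA //.
  by apply: integrableS ih => //; apply: subset_itv; rewrite bnd_simp.
have itf : mu.-integrable `[a, b] (EFin \o (fun t => t * f t)).
  by apply: integrable_continuousMl hfint => t; exact: cvg_id.
have cdf_y : cdf_of f a y = cdf_of f a x + \int[mu]_(t in `[x, y]) f t.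
  rewrite /cdf_of (Rintegral_itv_split ax xy) //.
  by apply: integrableS hfint => //; apply: subset_itv; rewrite bnd_simp.
have P1a : parabola a 0 a = 0 by rewrite /parabola subrr expr0n /= mul0r addr0.
have P3b : parabola b 0 b = 0 by rewrite /parabola subrr expr0n /= mul0r addr0.
have P2x : parabola ((a + b) / 2) k x = parabola a 0 x.
  by rewrite /parabola /k /kernel_shift; field.
have P2y : parabola ((a + b) / 2) k y = parabola b 0 y.
  by rewrite /parabola /k /kernel_shift /y; field.
have P1x : x = b -> parabola a 0 x = 0 by move=> exb; rewrite exb ltxx in xb.
have P2a : x = a -> parabola ((a + b) / 2) k x = 0 by move=> exa; rewrite P2x exa.
have P2b : y = b -> parabola ((a + b) / 2) k y = 0 by move=> eyb; rewrite P2y eyb.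
have P3y : y = a -> parabola b 0 y = 0 by move=> eya; rewrite eya ltxx in ay.
rewrite (Rintegral_derive_parabola (lexx a) ax (ltW xb) (fun=> P1a) P1x).
rewrite (Rintegral_derive_parabola ax xy yb P2a P2b).
rewrite (Rintegral_derive_parabola (ltW ay) yb (lexx b) P3y (fun=> P3b)).
rewrite P1a P2x P2y P3b cdf_y /cdf_of /mean_of (split3 _ itf).
have b_mass : b = b * \int[mu]_(t in `[a, b]) f t by rewrite hf1 mulr1.
rewrite [X in X - (_ + _ + _)]b_mass (split3 f hfint).
by field; rewrite subr_eq0 gt_eqF.
Qed.

Lemma peano_sum_derive_le (x : R) : a <= x <= (a + b) / 2 ->
  `|peano_sum (fun u v P => \int[mu]_(t in `[u, v]) (f' t * P t)) a b x|
  <= Num.sqrt (peano_sum (fun u v P => \int[mu]_(t in `[u, v]) (P t ^+ 2)) a b x)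
     * L2norm f' a b.
Proof.
move=> /andP[ax xm]; have [am mb] := midf_lt hab.
(* Cauchy-Schwarz in the form |\int g h| <= (l \int h^2 + \int g^2 / l) / 2 for
   every l > 0, which adds up over the three pieces. *)
have xy : x <= a + b - x by lra.
have yb : a + b - x <= b by lra.
have ay : a <= a + b - x by lra.
have xb : x <= b by lra.
have piece (u v c k l : R) : a <= u -> v <= b -> 0 < l ->
    `|\int[mu]_(t in `[u, v]) (f' t * parabola c k t)| <=
    (l * \int[mu]_(t in `[u, v]) (parabola c k t ^+ 2)
     + \int[mu]_(t in `[u, v]) (f' t ^+ 2) / l) / 2.
  move=> au vb l_gt0; apply: Rintegral_mul_le_amgm => //.
  - exact: integrable_derive_parabola.
  - by apply: integrableS hf'L2 => //; apply: subset_itv; rewrite bnd_simp.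
  - exact: integrable_parabola_sqr.
rewrite /L2norm; apply: le_sqrt_mul_of_amgm.
- by rewrite /peano_sum !addr_ge0 // Rintegral_ge0 // => t _; exact: sqr_ge0.
- by rewrite Rintegral_ge0 // => t _; exact: sqr_ge0.
move=> l l_gt0.
rewrite (Rintegral_itv_split ax xb hf'L2) (Rintegral_itv_split xy yb); last first.
  by apply: integrableS hf'L2 => //; apply: subset_itv; rewrite bnd_simp.
have h1 := piece a x a 0 l (lexx a) xb l_gt0.
have h2 := piece x (a + b - x) ((a + b) / 2) (kernel_shift a b x) l ax yb l_gt0.
have h3 := piece (a + b - x) b b 0 l ay (lexx b) l_gt0.
rewrite /peano_sum.
apply: le_trans (ler_normD _ _) _.
apply: le_trans (lerD (ler_normD _ _) (lexx _)) _.
apply: le_trans (lerD (lerD h1 h2) h3) _.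
by rewrite le_eqVlt; apply/orP; left; apply/eqP; ring.
Qed.

End density.

Theorem theorem4p2 (R : realType) (a b : R) (f : R -> R)
  (hab : a < b)
  (hf01 : forall t, a <= t <= b -> 0 <= f t <= 1)
  (hfint : (@lebesgue_measure R).-integrable `[a, b] (fun t => (f t)%:E))
  (hf1 : \int[@lebesgue_measure R]_(t in `[a, b]) f t = 1)
  (hF1 : forall x, a < x < b -> derivable (cdf_of f a) x 1 /\ derive1 (cdf_of f a) x = f x)
  (hf2 : forall x, a < x < b -> derivable f x 1)
  (hf'c : {within `]a, b[, continuous derive1 f})
  (hf'L2 : (@lebesgue_measure R).-integrable `[a, b] (fun t => ((derive1 f t) ^+ 2)%:E)) :
  forall x, a <= x <= (a + b) / 2 ->
    `| (cdf_of f a x + cdf_of f a (a + b - x)) / 2 - (b - mean_of f a b) / (b - a) |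
    <= Num.sqrt (b - a) / pi
       * Num.sqrt ((b - a) ^+ 2 / 48 + (x - (3 * a + b) / 4) ^+ 2)
       * L2norm (derive1 f) a b.
Proof.
move=> x hx.
have L_gt0 : 0 < b - a by rewrite subr_gt0.
rewrite (deviation_peano_sum hab hf01 hfint hf1 hf2 hf'c hf'L2 hx).
rewrite normrM normrN [`|_^-1|]gtr0_norm ?invr_gt0 // ler_pdivrMr //.
apply: le_trans (peano_sum_derive_le hab hf'c hf'L2 hx) _.
rewrite mulrAC; apply: ler_wpM2r; first exact: sqrtr_ge0.
by rewrite mulrC; exact: sqrt_peano_sum_sqr_le.
Qed.
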